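(* Let $\epsilon,\epsilon_\theta\in[0,1]$ and $\theta\in\mathbb R$. If $\frac{2}{2-\epsilon}+\epsilon_\theta-2\ge 0$, then $\mathsf N^{\rm prono}$ (noise $\epsilon$) and $\mathsf Q_\theta^{\rm prono}$ (noise $\epsilon_\theta$) are jointly measurable. Moreover, if $\epsilon=\epsilon_\theta\ge 1/2$, they are jointly measurable.
   Context: All operators act on $\mathbb C^2$. The noisy projected number POVM: $\mathsf N^{\rm prono}_0=\begin{pmatrix}1-\epsilon/2&0\\0&\epsilon/2\end{pmatrix}$, $\mathsf N^{\rm prono}_1=\begin{pmatrix}\epsilon/2&0\\0&1-\epsilon/2\end{pmatrix}$. The noisy projected quadrature POVM on Borel $Y\subseteq\mathbb R$: $$\mathsf Q_\theta^{\rm prono}(Y)=\int_Y\begin{pmatrix}1&(1-\epsilon_\theta)\sqrt2\,y\,e^{-i\theta}\\(1-\epsilon_\theta)\sqrt2\,y\,e^{i\theta}&(1-\epsilon_\theta)2y^2+\epsilon_\theta\end{pmatrix}\frac{e^{-y^2}\,dy}{\sqrt\pi}.$$ Joint measurability means existence of a POVM $\mathsf G$ on $\{0,1\}\times\mathbb R$ with $\mathsf G(\{n\}\times\mathbb R)=\mathsf N^{\rm prono}_n$ and $\mathsf G(\{0,1\}\times Y)=\mathsf Q_\theta^{\rm prono}(Y)$. *)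

From mathcomp Require Import all_boot all_algebra.
From mathcomp Require Import all_classical all_reals all_analysis.
From mathcomp Require Import complex.
Import GRing.Theory Num.Theory.
Import numFieldNormedType.Exports.
Set Implicit Arguments. Unset Strict Implicit. Unset Printing Implicit Defensive.
Local Open Scope ring_scope.
Local Open Scope classical_set_scope.
Local Open Scope complex_scope.

Notation cmat R := 'M[R[i]]_2.

Definition mx2 (R : realType) (a b c d : R[i]) : cmat R :=
  \matrix_(k < 2, l < 2)
    if k == 0 then (if l == 0 then a else b) else (if l == 0 then c else d).

Definition adjmx (R : realType) m n (A : 'M[R[i]]_(m, n)) : 'M[R[i]]_(n, m) :=
  map_mx (@conjc R) A^T.

(* positive semidefinite: <v, A v> is a nonnegative real for every v in C^2
   (0 <= z in R[i] means Im z = 0 and Re z >= 0) *)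
Definition psd (R : realType) (A : cmat R) : Prop :=
  forall v : 'cV[R[i]]_2, 0 <= (adjmx v *m A *m v) 0 0.

(* POVM on a measurable space T with values in operators on C^2:
   positive on measurable sets, normalized, and (weakly) sigma-additive:
   for each v, the quadratic form A |-> <v, G(A) v> is countably additive. *)
Definition POVM (d : measure_display) (T : measurableType d) (R : realType)
    (G : set T -> cmat R) : Prop :=
  [/\ (forall A, measurable A -> psd (G A)),
      G setT = 1%:M &
      (forall (F : nat -> set T), (forall k, measurable (F k)) ->
         trivIset setT F ->
         forall v : 'cV[R[i]]_2,
           (fun n => \sum_(0 <= k < n) (complex.Re ((adjmx v *m G (F k) *m v) 0 0) : R))
             @ \oo --> (complex.Re ((adjmx v *m G (\bigcup_k F k) *m v) 0 0) : R))].

(* Noisy projected number POVM; outcome n = 0 is [false], n = 1 is [true]. *)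
Definition Nprono (R : realType) (eps : R) (n : bool) : cmat R :=
  if ~~ n then mx2 (1 - eps / 2)%:C 0 0 (eps / 2)%:C
  else mx2 (eps / 2)%:C 0 0 (1 - eps / 2)%:C.

Definition gauss (R : realType) (y : R) : R := expR (- y ^+ 2) / Num.sqrt pi.

Definition qdens (R : realType) (epst theta y : R) : cmat R :=
  mx2 1
      ((((1 - epst) * Num.sqrt 2 * y)%:C) * Complex (cos theta) (- sin theta))
      ((((1 - epst) * Num.sqrt 2 * y)%:C) * Complex (cos theta) (sin theta))
      ((1 - epst) * 2 * y ^+ 2 + epst)%:C.

(* Q_theta^prono(Y) = int_Y qdens(y) e^{-y^2}/sqrt(pi) dy  (entrywise, real and
   imaginary parts integrated separately w.r.t. Lebesgue measure) *)
Definition Qprono (R : realType) (epst theta : R) (Y : set R) : cmat R :=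
  \matrix_(k < 2, l < 2)
    Complex
      (Rintegral (@lebesgue_measure R) Y
         (fun y => complex.Re (qdens epst theta y k l) * gauss y))
      (Rintegral (@lebesgue_measure R) Y
         (fun y => complex.Im (qdens epst theta y k l) * gauss y)).

Definition jointly_measurable (R : realType) (eps epst theta : R) : Prop :=
  exists G : set (bool * R) -> cmat R,
    [/\ POVM G,
        (forall n : bool, G [set p | p.1 = n] = Nprono eps n) &
        (forall Y : set R, measurable Y -> G [set p | Y p.2] = Qprono epst theta Y)].

From mathcomp Require Import all_boot all_order all_algebra.
From mathcomp Require Import all_classical all_reals all_analysis.
From mathcomp Require Import complex measurable_realfun normal_distribution.
From mathcomp Require Import ring lra.
Import Order.TTheory GRing.Theory Num.Theory.
Import numFieldNormedType.Exports.
Set Implicit Arguments. Unset Strict Implicit. Unset Printing Implicit Defensive.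
Local Open Scope ring_scope.
Local Open Scope classical_set_scope.

(* Idea: build the joint POVM G on {0,1} x R from operator densities.  On the
   slice {n} x R we integrate a density y |-> [[A, B y e^{-i theta}],
   [B y e^{i theta}, C + D y^2]] against the Gaussian weight e^{-y^2}/sqrt(pi).
   Such a block depends on Y only through the moments of order 0, 1, 2 of the
   weight over Y, which are finite signed measures; the moments over the whole
   line are 1, 0 and 1/2.  Hence
   - G is sigma-additive because the moments are,
   - G is positive as soon as each density is pointwise psd,
   - the quadrature marginal is obtained when the two densities add up to the
     density of Q_theta^prono, and the number marginal is read off from the
     total moments.
   Splitting the quadrature density with an off-diagonal weight m for outcome 0
   and 1 - epst - m for outcome 1 gives psd halves when both weights lie in
   [0, eps/2], which is possible exactly when 1 - epst <= eps; both hypotheses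
   of the theorem imply this inequality. *)

Section GaussianMoments.
Variable R : realType.
Notation mu := (@lebesgue_measure R).

Definition gmoment (j : nat) (Y : set R) : R :=
  \int[mu]_(y in Y) (y ^+ j * gauss y).

Lemma sqrtpi_gt0 : 0 < Num.sqrt (pi : R).
Proof. by rewrite sqrtr_gt0 pi_gt0. Qed.

Lemma gauss_ge0 (y : R) : 0 <= gauss y.
Proof. by rewrite /gauss divr_ge0 ?expR_ge0 ?sqrtr_ge0. Qed.

Lemma gaussE (y : R) : gauss y = (Num.sqrt pi)^-1 * gauss_fun y.
Proof. by rewrite /gauss /gauss_fun mulrC. Qed.

Lemma integrable_scale (Y : set R) (h : R -> R) (c : R) : measurable Y ->
  mu.-integrable Y (EFin \o h) -> mu.-integrable Y (EFin \o (fun y => c * h y)).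
Proof.
move=> mY ih; rewrite (_ : EFin \o _ = fun y => (c%:E * (EFin \o h) y)%E).
  exact: integrableZl.
by apply/funext => y /=; rewrite EFinM.
Qed.

Lemma integrable_add (Y : set R) (h1 h2 : R -> R) : measurable Y ->
  mu.-integrable Y (EFin \o h1) -> mu.-integrable Y (EFin \o h2) ->
  mu.-integrable Y (EFin \o (fun y => h1 y + h2 y)).
Proof.
move=> mY i1 i2; rewrite (_ : EFin \o _ = (EFin \o h1) \+ (EFin \o h2))%E.
  exact: integrableD.
by apply/funext => y /=; rewrite EFinD.
Qed.

(* For j <= 2, |y^j| e^{-y^2} <= (1 + y^2) e^{-y^2} <= 2 e^{-y^2/2}, a multiple
   of the standard normal density. *)
Lemma moment_dominated j (y : R) : (j <= 2)%N ->
  `| y ^+ j * gauss_fun y | <= (2 / normal_peak 1) * normal_pdf 0 1 y.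
Proof.
move=> hj.
have np : 0 < normal_peak (1 : R) by rewrite normal_peak_gt0 ?oner_neq0.
rewrite normal_pdfE ?oner_neq0 //= /normal_fun /gauss_fun subr0 expr1n.
rewrite normrM (ger0_norm (expR_ge0 _)).
have pow_le : `|y ^+ j| <= 1 + y ^+ 2.
  case: j hj => [|[|[|]]]// _.
  - by rewrite expr0 normr1 lerDl sqr_ge0.
  - rewrite expr1; case: (lerP `|y| 1) => h.
      by apply: le_trans h _; rewrite lerDl sqr_ge0.
    apply: le_trans (_ : `|y| ^+ 2 <= _); last by rewrite real_normK ?num_real // lerDr.
    by rewrite expr2 -[X in X <= _]mul1r ler_wpM2r // ltW.
  - by rewrite normrX real_normK ?num_real // lerDr.
have poly_le_exp : 1 + y ^+ 2 <= 2 * expR (y ^+ 2 / 2).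
  have := expR_ge1Dx (y ^+ 2 / 2); lra.
have exp_split : expR (y ^+ 2 / 2) * expR (- y ^+ 2) = expR (- y ^+ 2 / 2).
  by rewrite -expRD; congr expR; field.
rewrite [X in _ <= X](_ : _ = (2 * expR (y ^+ 2 / 2)) * expR (- y ^+ 2)); last first.
  by rewrite mulrAC -exp_split; field; rewrite gt_eqF.
by rewrite ler_wpM2r ?expR_ge0 //; exact: le_trans pow_le poly_le_exp.
Qed.

Lemma integrable_moment j (Y : set R) : (j <= 2)%N -> measurable Y ->
  mu.-integrable Y (EFin \o (fun y => y ^+ j * gauss_fun y)).
Proof.
move=> hj mY; apply: integrableS (_ : mu.-integrable setT _) => //.
apply: (@le_integrable _ _ _ mu setT measurableT _
  (fun y => ((2 / normal_peak 1) * normal_pdf 0 1 y)%:E)).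
- apply/measurable_EFinP; apply: measurable_funM; first exact: measurable_funX.
  exact: measurable_gauss_fun.
- by move=> y _ /=; rewrite lee_fin (le_trans (moment_dominated _ hj)) ?ler_norm.
- under eq_fun do rewrite EFinM.
  exact: integrableZl (integrable_normal_pdf _ _).
Qed.

Lemma integrable_gmoment j (Y : set R) : (j <= 2)%N -> measurable Y ->
  mu.-integrable Y (EFin \o (fun y => y ^+ j * gauss y)).
Proof.
move=> hj mY; have := integrable_scale (Num.sqrt pi)^-1 mY (integrable_moment hj mY).
by apply: eq_integrable => // y _ /=; rewrite gaussE mulrCA.
Qed.

Lemma gmoment_quadratic (Y : set R) (f : R -> R) (c0 c1 c2 : R) : measurable Y ->
  (forall y, f y = c0 + c1 * y + c2 * y ^+ 2) ->
  \int[mu]_(y in Y) (f y * gauss y) =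
    c0 * gmoment 0 Y + c1 * gmoment 1 Y + c2 * gmoment 2 Y.
Proof.
move=> mY hf.
have i0 := integrable_gmoment (isT : (0 <= 2)%N) mY.
have i1 := integrable_gmoment (isT : (1 <= 2)%N) mY.
have i2 := integrable_gmoment (isT : (2 <= 2)%N) mY.
rewrite (@eq_Rintegral _ _ _ mu Y (fun y => (c0 * (y ^+ 0 * gauss y)
   + c1 * (y ^+ 1 * gauss y)) + c2 * (y ^+ 2 * gauss y))); last first.
  by move=> y _; rewrite hf expr0 expr1; ring.
rewrite RintegralD //; last 2 first.
- by apply: integrable_add => //; apply: integrable_scale.
- exact: integrable_scale.
rewrite RintegralD //; try exact: integrable_scale.
rewrite !RintegralZl //; last first.
  by apply: eq_integrable i0 => // y _ /=; rewrite expr0 mul1r.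
rewrite mul1r /gmoment; congr (_ * _ + _ + _).
by apply: eq_Rintegral => y _; rewrite expr0 mul1r.
Qed.

Lemma gmoment_set0 j : gmoment j set0 = 0.
Proof. exact: Rintegral_set0. Qed.

(* Each moment is a (finite, signed) measure: it is sigma-additive. *)
Lemma gmoment_sigma_additive j (F : nat -> set R) : (j <= 2)%N ->
  (forall k, measurable (F k)) -> trivIset setT F ->
  (fun n => \sum_(0 <= k < n) gmoment j (F k)) @ \oo --> gmoment j (\bigcup_k F k).
Proof.
move=> hj mF tF.
have mU : measurable (\bigcup_k F k) by exact: bigcupT_measurable.
have integralE A : measurable A ->
    (\int[mu]_(x in A) (x ^+ j * gauss x)%:E)%E = (gmoment j A)%:E.
  by move=> mA; rewrite fineK // integrable_fin_num // integrable_gmoment.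
have sigma_add : (fun n => \sum_(0 <= k < n) (\int[mu]_(x in F k) (x ^+ j * gauss x)%:E)%E)
    @ \oo --> (\int[mu]_(x in \bigcup_k F k) (x ^+ j * gauss x)%:E)%E.
  exact: (@charge_semi_sigma_additive _ _ _
    (induced_charge (integrable_gmoment hj (@measurableT _ R))) F mF tF mU).
move: sigma_add; rewrite integralE // => /fine_cvgP[_]; apply: cvg_trans.
apply: near_eq_cvg; apply: nearW => n /=.
rewrite (eq_bigr (fun k => (gmoment j (F k))%:E)) ?sumEFin //.
move=> k _; exact: (integralE _ (mF k)).
Qed.

End GaussianMoments.
Section GaussianTotalMoments.
Variable R : realType.
Notation mu := (@lebesgue_measure R).

Lemma gmomentE j (Y : set R) : (j <= 2)%N -> measurable Y ->
  gmoment j Y = (\int[mu]_(y in Y) (y ^+ j * gauss_fun y)) / Num.sqrt pi.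
Proof.
move=> hj mY; rewrite /gmoment -RintegralZr //; last exact: integrable_moment.
by apply: eq_Rintegral => y _; rewrite gaussE; ring.
Qed.

Lemma gmoment0T : gmoment 0 [set: R] = 1.
Proof.
rewrite gmomentE // (_ : \int[mu]_(y in setT) (y ^+ 0 * gauss_fun y) = Num.sqrt pi).
  by rewrite divff // gt_eqF // sqrtpi_gt0.
rewrite /Rintegral -[RHS]/(fine (Num.sqrt pi)%:E) -integralT_gauss.
by congr fine; apply: eq_integral => y _; rewrite expr0 mul1r.
Qed.

(* An odd continuous integrable function that is nonnegative on [0, +oo[ has
   integral zero over the line: the reflection x |-> -x exchanges the two
   half-lines and flips the sign. *)
Lemma Rintegral_odd (h : R -> R) : continuous h -> (forall x, h (- x) = - h x) ->
  (forall x, 0 <= x -> 0 <= h x) -> mu.-integrable setT (EFin \o h) ->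
  \int[mu]_(x in setT) h x = 0.
Proof.
move=> ch hodd hpos ih.
have iS A : measurable A -> mu.-integrable A (EFin \o h).
  by move=> mA; exact: integrableS ih.
have reflect_half :
    \int[mu]_(x in `]-oo, 0%R]) (-1 * h x) = \int[mu]_(x in `[0%R, +oo[) h x.
  have := @ge0_integration_by_substitutionNy R (fun x => -1 * h x) 0.
  rewrite oppr0 /Rintegral => -> //.
  - by congr fine; apply: eq_integral => x _ /=; rewrite hodd mulN1r opprK.
  - apply: continuous_subspaceT => x.
    exact: cvgMl_tmp (ch x).
  - by move=> x; rewrite in_itv /= => x0; rewrite mulN1r -hodd hpos // oppr_ge0 ltW.
have neg_half : \int[mu]_(x in `]-oo, 0%R]) h x = - \int[mu]_(x in `[0%R, +oo[) h x.
  by rewrite -reflect_half RintegralZl ?iS // mulN1r opprK.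
have splitT : setT = `]-oo, 0%R[ `|` `[0%R, +oo[ :> set R.
  apply/seteqP; split => x //= _; rewrite !in_itv /= andbT.
  by case: (ltrP x 0) => hx; [left|right].
rewrite splitT Rintegral_setU //; last 2 first.
- by rewrite -splitT.
- apply/disj_setPS => x [] /=; rewrite !in_itv /= andbT => x0 x0'.
  by move: (lt_le_trans x0 x0'); rewrite ltxx.
by rewrite Rintegral_itv_bndo_bndc ?iS // neg_half addNr.
Qed.

(* The weight is even, so its first moment over the line vanishes. *)
Lemma gmoment1T : gmoment 1 [set: R] = 0.
Proof.
rewrite gmomentE // Rintegral_odd ?mul0r //.
- move=> x; apply: (@continuousM _ _ (fun y : R => y ^+ 1) gauss_fun).
    exact: exprn_continuous.
  exact: continuous_gauss_fun.
- by move=> x; rewrite /gauss_fun sqrrN !expr1 mulNr.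
- by move=> x x0; rewrite mulr_ge0 ?expr1 ?gauss_fun_ge0.
- exact: integrable_moment.
Qed.

Lemma is_derive_gauss_fun (x : R) : is_derive x 1 gauss_fun (- (2 * x) * gauss_fun x).
Proof.
have dsq : is_derive x 1 (fun y : R => - y ^+ 2) (- (2 * x)).
  by apply: is_derive_eq; rewrite [_%:A]mulr1; ring.
have dexp : is_derive x 1 (expR \o (fun y : R => - y ^+ 2)) (expR (- x ^+ 2) * (- (2 * x))).
  exact: is_derive1_comp.
by rewrite mulrC; exact: dexp.
Qed.

(* Integration by parts for the second moment:
   d/dy (- y e^{-y^2}) = (2 y^2 - 1) e^{-y^2}. *)
Definition second_moment_prim (y : R) : R := - (y * gauss_fun y).
Definition second_moment_der (y : R) : R := (2 * y ^+ 2 - 1) * gauss_fun y.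

Lemma is_derive_second_moment_prim (x : R) :
  is_derive x 1 second_moment_prim (second_moment_der x).
Proof.
have d := is_deriveN (is_deriveM (is_derive_id x (1 : R)) (is_derive_gauss_fun x)).
rewrite (_ : second_moment_prim = - (id * gauss_fun)); last by apply/funext.
apply: is_derive_eq d _.
by rewrite /second_moment_der /GRing.scale /=; ring.
Qed.

Lemma derivable_second_moment_prim (x : R) : derivable second_moment_prim x 1.
Proof. exact: (@ex_derive _ _ _ _ _ _ _ (is_derive_second_moment_prim x)). Qed.

Lemma derive1_second_moment_prim (x : R) : second_moment_prim^`() x = second_moment_der x.
Proof.
by rewrite derive1E; exact: (@derive_val _ _ _ _ _ _ _ (is_derive_second_moment_prim x)).
Qed.

Lemma continuous_second_moment_prim : continuous second_moment_prim.
Proof.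
move=> x; apply/differentiable_continuous/derivable1_diffP.
exact: derivable_second_moment_prim.
Qed.

Lemma continuous_second_moment_der : continuous second_moment_der.
Proof.
move=> x; apply: (@continuousM _ _ (fun y : R => 2 * y ^+ 2 - 1) gauss_fun).
  apply: continuousB; last exact: cvg_cst.
  by apply: continuousM; [exact: cvg_cst | exact: exprn_continuous].
exact: continuous_gauss_fun.
Qed.

(* 0 <= y e^{-y^2} <= 1/y for y >= 1, hence the primitive vanishes at +oo. *)
Lemma second_moment_prim_cvgy : second_moment_prim x @[x --> +oo] --> (0 : R).
Proof.
have inv_cvg : (fun x : R => x^-1) x @[x --> +oo] --> (0 : R).
  have x_gt0 : \forall x \near (+oo : set_system R), 0 < x by exact: nbhs_pinfty_gt.
  by apply/(gtr0_cvgV0 x_gt0); exact: cvg_id.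
apply: (@squeeze_cvgr _ _ _ _ (fun x => - x^-1) (fun x => x^-1)); last 2 first.
- by rewrite -oppr0; apply: cvgN.
- exact: inv_cvg.
near=> x.
have x1 : 1 <= x by near: x; apply: nbhs_pinfty_ge.
have x0 : 0 < x by apply: lt_le_trans ltr01 x1.
have sq_le_exp : x ^+ 2 <= expR (x ^+ 2) by have := expR_ge1Dx (x ^+ 2); lra.
have bound : x * gauss_fun x <= x^-1.
  rewrite /gauss_fun expRN ler_pdivrMr ?expR_gt0 //.
  rewrite [X in X <= _](_ : x = x^-1 * x ^+ 2); last by field; rewrite gt_eqF.
  by rewrite ler_pM2l ?invr_gt0.
have pos : 0 <= x * gauss_fun x by rewrite mulr_ge0 ?gauss_fun_ge0 ?ltW.
by rewrite /second_moment_prim; apply/andP; split; lra.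
Unshelve. all: by end_near.
Qed.

Lemma integral_second_moment_der :
  (\int[mu]_(x in `[0%R, +oo[) (second_moment_der x)%:E = 0)%E.
Proof.
have mder : measurable_fun setT second_moment_der.
  exact: continuous_measurable_fun continuous_second_moment_der.
have cprim x : second_moment_prim y @[y --> x] --> second_moment_prim x.
  exact: continuous_second_moment_prim.
have tail : (\int[mu]_(x in `[1%R, +oo[) (second_moment_der x)%:E =
    (0 - second_moment_prim 1)%:E)%E.
  rewrite EFinB; apply: ge0_continuous_FTC2y.
  - move=> x x1; rewrite /second_moment_der mulr_ge0 ?gauss_fun_ge0 //.
    have : 1 <= x ^+ 2 by rewrite expr_ge1 // (le_trans ler01).
    lra.
  - exact: continuous_subspaceT continuous_second_moment_der.
  - exact: second_moment_prim_cvgy.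
  - by move=> x _; exact: derivable_second_moment_prim.
  - exact: cvg_at_right_filter.
  - by move=> x _; exact: derive1_second_moment_prim.
have head : (\int[mu]_(x in `[0%R, 1%R]) (second_moment_der x)%:E =
    (second_moment_prim 1)%:E - (second_moment_prim 0)%:E)%E.
  apply: continuous_FTC2.
  - exact: ltr01.
  - exact: continuous_subspaceT continuous_second_moment_der.
  - split; first by move=> x _; exact: derivable_second_moment_prim.
      exact: cvg_at_right_filter.
    exact: cvg_at_left_filter.
  - by move=> x _; exact: derive1_second_moment_prim.
have -> : `[0, +oo[ = `[0, 1] `|` `]1, +oo[ :> set R.
  by rewrite -itv_bndbnd_setU //= bnd_simp.
rewrite integral_setU //=; last 2 first.
- exact: measurable_funTS (measurableT_comp _ mder).
- apply/disj_setPS => x [] /=; rewrite !in_itv /= => /andP[_ x1] /andP[x1' _].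
  by move: (lt_le_trans x1' x1); rewrite ltxx.
rewrite integral_itv_obnd_cbnd; last exact: measurable_funTS (measurableT_comp _ mder).
rewrite tail head /second_moment_prim -!EFinD mul0r oppr0.
by congr EFin; ring.
Qed.

Lemma Rintegral_second_moment_half :
  \int[mu]_(y in `[0%R, +oo[) (y ^+ 2 * gauss_fun y) = Num.sqrt pi / 4.
Proof.
have m0 : measurable (`[0%R, +oo[ : set R) by [].
have i0 := integrable_moment (isT : (0 <= 2)%N) m0.
have i2 := integrable_moment (isT : (2 <= 2)%N) m0.
have i0' : mu.-integrable `[0%R, +oo[ (EFin \o gauss_fun).
  by apply: eq_integrable i0 => // y _ /=; rewrite expr0 mul1r.
have : \int[mu]_(y in `[0%R, +oo[) second_moment_der y = 0.
  by rewrite /Rintegral integral_second_moment_der.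
rewrite (@eq_Rintegral _ _ _ mu _
  (fun y => 2 * (y ^+ 2 * gauss_fun y) - gauss_fun y)); last first.
  by move=> y _; rewrite /second_moment_der; ring.
rewrite RintegralB // ?RintegralZl //; last exact: integrable_scale.
rewrite /Rintegral integral0y_gauss /=; lra.
Qed.

Lemma gmoment2T : gmoment 2 [set: R] = 2^-1.
Proof.
rewrite gmomentE // (_ : \int[mu]_(y in setT) (y ^+ 2 * gauss_fun y) = Num.sqrt pi / 2).
  by field; rewrite gt_eqF // sqrtpi_gt0.
have fin : (\int[mu]_(x in `[0%R, +oo[) (x ^+ 2 * gauss_fun x)%:E)%E \is a fin_num.
  by apply: integrable_fin_num => //; exact: integrable_moment.
rewrite /Rintegral ge0_symfun_integralT.
- rewrite (_ : [set x : R | 0 <= x] = `[0%R, +oo[); last first.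
    by apply/seteqP; split => x /=; rewrite in_itv /= andbT.
  have := Rintegral_second_moment_half; rewrite /Rintegral => half.
  by rewrite -(fineK fin) -EFinM /= half; field.
- by move=> x; rewrite mulr_ge0 ?sqr_ge0 ?gauss_fun_ge0.
- move=> x; apply: (@continuousM _ _ (fun y : R => y ^+ 2) gauss_fun).
    exact: exprn_continuous.
  exact: continuous_gauss_fun.
- by move=> x /=; rewrite /gauss_fun !sqrrN.
Qed.

End GaussianTotalMoments.
Local Open Scope complex_scope.

Section PhaseMatrices.
Variable R : realType.

(* The 2x2 matrices [[a, b e^{-i theta}], [b e^{i theta}, d]] with a, b, d real:
   every operator of the construction has this shape. *)
Definition phase_mx (a b d theta : R) : cmat R :=
  mx2 a%:C (b%:C * Complex (cos theta) (- sin theta))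
      (b%:C * Complex (cos theta) (sin theta)) d%:C.

Lemma phase_mxD (a b d a' b' d' theta : R) :
  phase_mx a b d theta + phase_mx a' b' d' theta =
  phase_mx (a + a') (b + b') (d + d') theta.
Proof.
apply/matrixP => -[[|[|//]] ?] -[[|[|//]] ?]; rewrite !mxE /=.
all: by apply/eqP; rewrite eq_complex /=; apply/andP; split; apply/eqP; ring.
Qed.

Lemma phase_mx0 (theta : R) : phase_mx 0 0 0 theta = 0.
Proof.
apply/matrixP => -[[|[|//]] ?] -[[|[|//]] ?]; rewrite !mxE /=.
all: by apply/eqP; rewrite eq_complex /=; apply/andP; split; apply/eqP; ring.
Qed.

Lemma qform2 (v : 'cV[R[i]]_2) (A : cmat R) :
  (adjmx v *m A *m v) 0 0 =
  (v 0 0)^* * (A 0 0 * v 0 0 + A 0 1 * v 1 0) +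
  (v 1 0)^* * (A 1 0 * v 0 0 + A 1 1 * v 1 0).
Proof.
rewrite !mxE !big_ord_recr !big_ord0 /= !add0r !mxE !big_ord_recr !big_ord0 /= !add0r.
have -> : widen_ord (leqnSn 1) ord_max = 0 :> 'I_2 by apply/val_inj.
have -> : ord_max = 1 :> 'I_2 by apply/val_inj.
by rewrite /adjmx !mxE; ring.
Qed.

(* For v = (v0, v1): |v0|^2, |v1|^2 and the interference term
   complex.Re (e^{i theta} conj(v0) v1). *)
Definition nrm0 (v : 'cV[R[i]]_2) : R := complex.Re (v 0 0) ^+ 2 + complex.Im (v 0 0) ^+ 2.
Definition nrm1 (v : 'cV[R[i]]_2) : R := complex.Re (v 1 0) ^+ 2 + complex.Im (v 1 0) ^+ 2.
Definition interf (theta : R) (v : 'cV[R[i]]_2) : R :=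
  (complex.Re (v 0 0) * complex.Re (v 1 0) + complex.Im (v 0 0) * complex.Im (v 1 0)) * cos theta
  + (complex.Re (v 0 0) * complex.Im (v 1 0) - complex.Im (v 0 0) * complex.Re (v 1 0)) * sin theta.

Lemma nrm0_ge0 v : 0 <= nrm0 v. Proof. by rewrite addr_ge0 ?sqr_ge0. Qed.
Lemma nrm1_ge0 v : 0 <= nrm1 v. Proof. by rewrite addr_ge0 ?sqr_ge0. Qed.

Lemma phase_mx_form (a b d theta : R) (v : 'cV[R[i]]_2) :
  (adjmx v *m phase_mx a b d theta *m v) 0 0 =
  (a * nrm0 v + 2 * b * interf theta v + d * nrm1 v)%:C.
Proof.
rewrite qform2 /phase_mx /mx2 !mxE /= /nrm0 /nrm1 /interf.
case: (v 0 0) => x0 y0; case: (v 1 0) => x1 y1 /=.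
by apply/eqP; rewrite eq_complex /=; apply/andP; split; apply/eqP; ring.
Qed.

(* Cauchy-Schwarz for the interference term, using cos^2 + sin^2 = 1. *)
Lemma interf_sqr_le (theta : R) v : interf theta v ^+ 2 <= nrm0 v * nrm1 v.
Proof.
rewrite /interf /nrm0 /nrm1.
set p := _ + _ * complex.Im (v 1 0); set q := _ - _ * complex.Re (v 1 0).
have lagrange : (p * cos theta + q * sin theta) ^+ 2 + (p * sin theta - q * cos theta) ^+ 2
    = p ^+ 2 + q ^+ 2.
  by rewrite -[RHS]mulr1 -(cos2Dsin2 theta); ring.
have expand : p ^+ 2 + q ^+ 2 = (complex.Re (v 0 0) ^+ 2 + complex.Im (v 0 0) ^+ 2) *
    (complex.Re (v 1 0) ^+ 2 + complex.Im (v 1 0) ^+ 2) by rewrite /p /q; ring.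
rewrite expand in lagrange.
by have := sqr_ge0 (p * sin theta - q * cos theta); lra.
Qed.

Lemma phase_mx_psd (a b d theta : R) :
  0 <= a -> 0 <= d -> b ^+ 2 <= a * d -> psd (phase_mx a b d theta).
Proof.
move=> a0 d0 bad v; rewrite phase_mx_form ler0c.
have P0 := nrm0_ge0 v; have Q0 := nrm1_ge0 v; have W2 := interf_sqr_le theta v.
set P := nrm0 v in P0 W2 *; set Q := nrm1 v in Q0 W2 *; set W := interf theta v in W2 *.
have S0 : 0 <= a * P + d * Q by rewrite addr_ge0 // mulr_ge0.
have amgm : 4 * (a * d) * (P * Q) <= (a * P + d * Q) ^+ 2.
  by have := sqr_ge0 (a * P - d * Q); nra.
have cross : b ^+ 2 * W ^+ 2 <= (a * d) * (P * Q).
  apply: le_trans (_ : b ^+ 2 * (P * Q) <= _).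
    by rewrite ler_wpM2l // sqr_ge0.
  by rewrite ler_wpM2r // mulr_ge0.
have : (2 * b * W) ^+ 2 <= (a * P + d * Q) ^+ 2 by nra.
nra.
Qed.

End PhaseMatrices.
Section PhaseDensities.
Variable R : realType.
Notation mu := (@lebesgue_measure R).

(* An operator density y |-> [[A, B y e^{-i theta}], [B y e^{i theta}, C + D y^2]]
   with respect to the Gaussian weight, given by its four real coefficients. *)
Record phase_density := PhaseDensity { dA : R; dB : R; dC : R; dD : R }.

Definition phase_density_add (p q : phase_density) : phase_density :=
  PhaseDensity (dA p + dA q) (dB p + dB q) (dC p + dC q) (dD p + dD q).

(* Sufficient condition for the density to be psd at every point y. *)
Definition admissible (p : phase_density) : Prop :=
  [/\ 0 <= dA p, 0 <= dC p, 0 <= dD p & dB p ^+ 2 <= dA p * dD p].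

(* The operator obtained by integrating the density against the weight over Y. *)
Definition block (p : phase_density) (theta : R) (Y : set R) : cmat R :=
  phase_mx (dA p * gmoment 0 Y) (dB p * gmoment 1 Y)
           (dC p * gmoment 0 Y + dD p * gmoment 2 Y) theta.

Definition quadrature_density (epst : R) : phase_density :=
  PhaseDensity 1 ((1 - epst) * Num.sqrt 2) epst ((1 - epst) * 2).

Lemma blockD (p q : phase_density) theta Y :
  block p theta Y + block q theta Y = block (phase_density_add p q) theta Y.
Proof. by rewrite /block phase_mxD /=; congr phase_mx; ring. Qed.

Lemma block_set0 (p : phase_density) theta : block p theta set0 = 0.
Proof. by rewrite /block !gmoment_set0 !mulr0 addr0 phase_mx0. Qed.

(* Over the whole line only the diagonal survives, since the weight has
   moments 1, 0 and 1/2. *)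
Lemma blockT (p : phase_density) theta :
  block p theta setT = phase_mx (dA p) 0 (dC p + dD p / 2) theta.
Proof. by rewrite /block gmoment0T gmoment1T gmoment2T !mulr1 mulr0. Qed.

Lemma Qprono_block (epst theta : R) (Y : set R) : measurable Y ->
  Qprono epst theta Y = block (quadrature_density epst) theta Y.
Proof.
move=> mY; apply/matrixP => -[[|[|//]] ?] -[[|[|//]] ?]; rewrite !mxE /=.
all: congr Complex.
- rewrite (@gmoment_quadratic _ _ _ 1 0 0 mY); first by ring.
  by move=> y; rewrite /qdens /mx2 mxE /=; ring.
- rewrite (@gmoment_quadratic _ _ _ 0 0 0 mY); first by ring.
  by move=> y; rewrite /qdens /mx2 mxE /=; ring.
- rewrite (@gmoment_quadratic _ _ _ 0 ((1 - epst) * Num.sqrt 2 * cos theta) 0 mY).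
    by ring.
  by move=> y; rewrite /qdens /mx2 mxE /=; ring.
- rewrite (@gmoment_quadratic _ _ _ 0 (- ((1 - epst) * Num.sqrt 2 * sin theta)) 0 mY).
    by ring.
  by move=> y; rewrite /qdens /mx2 mxE /=; ring.
- rewrite (@gmoment_quadratic _ _ _ 0 ((1 - epst) * Num.sqrt 2 * cos theta) 0 mY).
    by ring.
  by move=> y; rewrite /qdens /mx2 mxE /=; ring.
- rewrite (@gmoment_quadratic _ _ _ 0 ((1 - epst) * Num.sqrt 2 * sin theta) 0 mY).
    by ring.
  by move=> y; rewrite /qdens /mx2 mxE /=; ring.
- rewrite (@gmoment_quadratic _ _ _ epst 0 ((1 - epst) * 2) mY); first by ring.
  by move=> y; rewrite /qdens /mx2 mxE /=; ring.
- rewrite (@gmoment_quadratic _ _ _ 0 0 0 mY); first by ring.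
  by move=> y; rewrite /qdens /mx2 mxE /=; ring.
Qed.

Lemma block_form (p : phase_density) theta Y (v : 'cV[R[i]]_2) :
  complex.Re ((adjmx v *m block p theta Y *m v) 0 0) =
    gmoment 0 Y * (dA p * nrm0 v + dC p * nrm1 v)
  + gmoment 1 Y * (2 * dB p * interf theta v) + gmoment 2 Y * (dD p * nrm1 v).
Proof. by rewrite phase_mx_form /=; ring. Qed.

Lemma block_psd (p : phase_density) theta Y : admissible p -> measurable Y ->
  psd (block p theta Y).
Proof.
move=> [A0 C0 D0 BAD] mY v.
have pointwise y : 0 <= dA p * nrm0 v + 2 * (dB p * y) * interf theta v
    + (dC p + dD p * y ^+ 2) * nrm1 v.
  rewrite -ler0c -phase_mx_form; apply: phase_mx_psd => //.
  - by rewrite addr_ge0 // mulr_ge0 // sqr_ge0.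
  - rewrite exprMn mulrDr; have := sqr_ge0 y.
    have : 0 <= dA p * dC p by rewrite mulr_ge0.
    by nra.
rewrite phase_mx_form ler0c.
have := @gmoment_quadratic R Y (fun y => dA p * nrm0 v + 2 * (dB p * y) * interf theta v
    + (dC p + dD p * y ^+ 2) * nrm1 v) (dA p * nrm0 v + dC p * nrm1 v)
    (2 * dB p * interf theta v) (dD p * nrm1 v) mY.
move=> /(_ _)/esym quad_integral.
rewrite (_ : _ + _ = \int[mu]_(y in Y) ((dA p * nrm0 v + 2 * (dB p * y) * interf theta v
    + (dC p + dD p * y ^+ 2) * nrm1 v) * gauss y)).
  by apply: Rintegral_ge0 => y _; rewrite mulr_ge0 ?gauss_ge0.
by rewrite -quad_integral; [ring | move=> y; ring].
Qed.

(* The quadratic forms of blocks inherit sigma-additivity from the moments. *)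
Lemma block_sigma_additive (p : phase_density) theta (F : nat -> set R)
    (v : 'cV[R[i]]_2) :
  (forall k, measurable (F k)) -> trivIset setT F ->
  (fun n => \sum_(0 <= k < n) complex.Re ((adjmx v *m block p theta (F k) *m v) 0 0))
    @ \oo --> complex.Re ((adjmx v *m block p theta (\bigcup_k F k) *m v) 0 0).
Proof.
move=> mF tF; rewrite block_form.
set c0 := _ + _ * nrm1 v; set c1 := 2 * _ * _; set c2 := dD p * _.
have -> : (fun n => \sum_(0 <= k < n) complex.Re ((adjmx v *m block p theta (F k) *m v) 0 0))
  = (fun n => (\sum_(0 <= k < n) gmoment 0 (F k)) * c0
     + (\sum_(0 <= k < n) gmoment 1 (F k)) * c1 + (\sum_(0 <= k < n) gmoment 2 (F k)) * c2).
  apply/funext => n; under eq_bigr do rewrite block_form.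
  by rewrite !big_split /= !mulr_suml.
by apply: cvgD; first apply: cvgD; apply: cvgMr_tmp; exact: gmoment_sigma_additive.
Qed.

End PhaseDensities.
Section JointPOVM.
Variables (R : realType) (eps epst theta : R).
Variable dens : bool -> phase_density R.
Hypothesis dens_admissible : forall n, admissible (dens n).
Hypothesis dens_sum :
  phase_density_add (dens false) (dens true) = quadrature_density epst.
Hypothesis dens_number : forall n, block (dens n) theta setT = Nprono eps n.

Definition joint (A : set (bool * R)) : cmat R :=
  block (dens false) theta (xsection A false) + block (dens true) theta (xsection A true).

Lemma joint_number_marginal (n : bool) : joint [set p | p.1 = n] = Nprono eps n.
Proof.
have slice_n : xsection [set p : bool * R | p.1 = n] n = setT.
  by apply/seteqP; split => y // _; apply/xsectionP.
have slice_other : xsection [set p : bool * R | p.1 = n] (~~ n) = set0.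
  by apply/seteqP; split => y // /xsectionP /=; case: n {slice_n}.
rewrite /joint; case: n slice_n slice_other => /= -> ->.
- by rewrite block_set0 add0r dens_number.
- by rewrite block_set0 addr0 dens_number.
Qed.

Lemma joint_quadrature_marginal (Y : set R) : measurable Y ->
  joint [set p | Y p.2] = Qprono epst theta Y.
Proof.
move=> mY.
have slice b : xsection [set p : bool * R | Y p.2] b = Y.
  by apply/seteqP; split => y; [move/xsectionP | move=> hy; apply/xsectionP].
by rewrite /joint !slice blockD dens_sum Qprono_block.
Qed.

Lemma Nprono_sum : Nprono eps false + Nprono eps true = 1%:M.
Proof.
apply/matrixP => -[[|[|//]] ?] -[[|[|//]] ?]; rewrite !mxE /=.
all: by apply/eqP; rewrite eq_complex /=; apply/andP; split; apply/eqP; ring.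
Qed.

Lemma joint_setT : joint setT = 1%:M.
Proof.
have slice b : xsection [set: bool * R] b = setT.
  by apply/seteqP; split => y // _; apply/xsectionP.
by rewrite /joint !slice !dens_number Nprono_sum.
Qed.

Lemma joint_psd (A : set (bool * R)) : measurable A -> psd (joint A).
Proof.
move=> mA v; rewrite /joint mulmxDr mulmxDl mxE.
by apply: addr_ge0; apply: block_psd => //; exact: measurable_xsection.
Qed.

Lemma joint_sigma_additive (F : nat -> set (bool * R)) (v : 'cV[R[i]]_2) :
  (forall k, measurable (F k)) -> trivIset setT F ->
  (fun n => \sum_(0 <= k < n) complex.Re ((adjmx v *m joint (F k) *m v) 0 0))
    @ \oo --> complex.Re ((adjmx v *m joint (\bigcup_k F k) *m v) 0 0).
Proof.
move=> mF tF.
have slices_disjoint b : trivIset setT (fun k => xsection (F k) b).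
  move=> i j _ _ [y [/xsectionP Fi /xsectionP Fj]].
  by apply: tF => //; exists (b, y).
have form_split A : complex.Re ((adjmx v *m joint A *m v) 0 0) =
    complex.Re ((adjmx v *m block (dens false) theta (xsection A false) *m v) 0 0)
  + complex.Re ((adjmx v *m block (dens true) theta (xsection A true) *m v) 0 0).
  rewrite /joint mulmxDr mulmxDl mxE.
  by case: ((adjmx v *m block (dens false) _ _ *m v) 0 0) => ? ?;
    case: ((adjmx v *m block (dens true) _ _ *m v) 0 0).
have -> : (fun n => \sum_(0 <= k < n) complex.Re ((adjmx v *m joint (F k) *m v) 0 0)) =
  (fun n => \sum_(0 <= k < n)
      complex.Re ((adjmx v *m block (dens false) theta (xsection (F k) false) *m v) 0 0)
    + \sum_(0 <= k < n)
      complex.Re ((adjmx v *m block (dens true) theta (xsection (F k) true) *m v) 0 0)).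
  by apply/funext => n; rewrite -big_split; apply: eq_bigr => k _; exact: form_split.
rewrite form_split !xsection_bigcup.
by apply: cvgD; apply: block_sigma_additive => // k; exact: measurable_xsection.
Qed.

Lemma jointly_measurable_of_densities : jointly_measurable eps epst theta.
Proof.
exists joint; split.
- by split; [exact: joint_psd | exact: joint_setT | move=> *; exact: joint_sigma_additive].
- exact: joint_number_marginal.
- exact: joint_quadrature_marginal.
Qed.

End JointPOVM.
Section SplitDensities.
Variable R : realType.

(* Splitting the quadrature density between the two number outcomes; the
   off-diagonal weight m sent to outcome 0 is a free parameter. *)
Definition split_density (eps epst m : R) (n : bool) : phase_density R :=
  if n then PhaseDensity (eps / 2) ((1 - epst - m) * Num.sqrt 2)
              (epst - eps / 2 + m) (2 * (1 - epst - m))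
  else PhaseDensity (1 - eps / 2) (m * Num.sqrt 2) (eps / 2 - m) (2 * m).

Lemma split_density_sum (eps epst m : R) :
  phase_density_add (split_density eps epst m false) (split_density eps epst m true)
  = quadrature_density epst.
Proof. by rewrite /phase_density_add /quadrature_density /=; congr PhaseDensity; ring. Qed.

Lemma split_density_number (eps epst m theta : R) (n : bool) :
  block (split_density eps epst m n) theta setT = Nprono eps n.
Proof.
rewrite blockT /phase_mx /Nprono !mul0r.
by case: n => /=; congr mx2; congr (_%:C); field.
Qed.

Lemma sqrt2_sqr : Num.sqrt (2 : R) ^+ 2 = 2.
Proof. by rewrite sqr_sqrtr // ler0n. Qed.

Lemma split_density_admissible (eps epst m : R) (n : bool) : eps <= 1 ->
  0 <= m <= eps / 2 -> 0 <= 1 - epst - m <= eps / 2 ->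
  admissible (split_density eps epst m n).
Proof.
move=> eps1 /andP[m0 m_le] /andP[r0 r_le].
case: n; split => /=; rewrite ?exprMn ?sqrt2_sqr; try nra; lra.
Qed.

(* The sufficient condition behind both parts of the theorem:
   1 - epst <= eps. Take m = min (1 - epst) (eps / 2). *)
Lemma jointly_measurable_of_noise (eps epst theta : R) :
  0 <= eps <= 1 -> epst <= 1 -> 1 - epst <= eps ->
  jointly_measurable eps epst theta.
Proof.
move=> /andP[eps0 eps1] epst1 noise.
have [m [m_bounds r_bounds]] : exists m : R,
    0 <= m <= eps / 2 /\ 0 <= 1 - epst - m <= eps / 2.
  case: (lerP (1 - epst) (eps / 2)) => hc.
  - by exists (1 - epst); split; apply/andP; split; lra.
  - by exists (eps / 2); split; apply/andP; split; lra.
apply: (@jointly_measurable_of_densities _ _ _ _ (split_density eps epst m)).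
- by move=> n; exact: split_density_admissible.
- exact: split_density_sum.
- exact: split_density_number.
Qed.

End SplitDensities.

Close Scope complex_scope.

(* The paper's condition 2/(2 - eps) + epst - 2 >= 0 implies 1 - epst <= eps,
   because (1 + eps)(2 - eps) = 2 + eps (1 - eps) >= 2. *)
Lemma noise_condition (R : realType) (eps epst : R) : 0 <= eps <= 1 ->
  2 / (2 - eps) + epst - 2 >= 0 -> 1 - epst <= eps.
Proof.
move=> /andP[eps0 eps1] cond.
have pos : 0 < 2 - eps by lra.
have : 2 / (2 - eps) <= 1 + eps.
  rewrite ler_pdivrMr // mulrDl mul1r; nra.
lra.
Qed.

Theorem mainTheorem8 (R : realType) (eps epst theta : R) :
  0 <= eps <= 1 -> 0 <= epst <= 1 ->
  (2 / (2 - eps) + epst - 2 >= 0 -> jointly_measurable eps epst theta) /\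
  (eps = epst -> 1 / 2 <= eps -> jointly_measurable eps epst theta).
Proof.
move=> eps01 /andP[_ epst1]; split.
- move=> cond; apply: jointly_measurable_of_noise => //.
  exact: noise_condition cond.
- move=> <- half; apply: jointly_measurable_of_noise => //; lra.
Qed.
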